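(* For $U>0$, $\mu\in\mathbb{R}$, $T\ge0$ there exist constants $\eta>0$, $C>0$ depending only on $T,U,\mu$ such that for all $(\gamma,\alpha,\rho_0)\in\mathcal{D}$, $\mathcal{F}(\gamma,\alpha,\rho_0)\ge \eta(\rho_0^2+\rho_\gamma^2)-C$, where $\rho_\gamma=\int_{\mathbb{T}^3}\gamma\,dp$. In particular, for any minimizing sequence $(\gamma_n,\alpha_n,\rho_{0,n})$ of $\mathcal{F}$ over $\mathcal{D}$, the sequence $\rho_{0,n}$ is bounded and the sequences $\gamma_n$ and $\alpha_n$ are bounded in $L^1(\mathbb{T}^3)$.
   Context: Let $\mathbb{T}^3=[-\pi,\pi]^3$ with periodic identification and normalized Haar measure $dp$. Let $\varepsilon(p)=4\sum_{k=1}^3\sin^2(p_k/2)$. $\mathcal{D}=\{(\gamma,\alpha,\rho_0): \gamma\in L^1(\mathbb{T}^3),\ \gamma\ge0,\ \alpha^2\le\gamma(1+\gamma)\text{ a.e.},\ \rho_0\ge0\}$. With $\beta=\sqrt{(\tfrac12+\gamma)^2-\alpha^2}$, $S(\gamma,\alpha)=\int\big[(\beta+\tfrac12)\ln(\beta+\tfrac12)-(\beta-\tfrac12)\ln(\beta-\tfrac12)\big]dp$, and $\mathcal{F}(\gamma,\alpha,\rho_0)=\int(\varepsilon-\mu)\gamma\,dp-\mu\rho_0-TS(\gamma,\alpha)+\frac U2(\int\alpha)^2+U(\int\gamma)^2+U\rho_0\int\alpha+2U\rho_0\int\gamma+\frac U2\rho_0^2$ (integrals over $\mathbb{T}^3$).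 *)

From HB Require Import structures.
From mathcomp Require Import all_boot all_order all_algebra.
From mathcomp Require Import all_classical all_reals all_analysis.
Set Implicit Arguments. Unset Strict Implicit. Unset Printing Implicit Defensive.
Import Order.TTheory GRing.Theory Num.Theory.
Import numFieldNormedType.Exports.
Local Open Scope classical_set_scope.
Local Open Scope ring_scope.

(* Points of the torus are represented in R^3 = (R * R) * R; the torus T^3 is
   the fundamental box [-pi,pi]^3, the measure is 3-dimensional Lebesgue
   measure (iterated product), and the normalized Haar measure dp is
   Lebesgue measure on the box divided by (2 pi)^3. *)
Definition pt (R : realType) := ((R * R) * R)%type.

Definition leb3 (R : realType) :=
  (((@lebesgue_measure R) \x (@lebesgue_measure R)) \x (@lebesgue_measure R))%E.

Definition box (R : realType) : set (pt R) :=
  (`[- pi, pi] `*` `[- pi, pi]) `*` `[- pi, pi].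

Definition tint (R : realType) (f : pt R -> R) : R :=
  Rintegral (@leb3 R) (@box R) f / (2 * pi) ^+ 3.

Definition disp (R : realType) (p : pt R) : R :=
  4 * (sin (p.1.1 / 2) ^+ 2 + sin (p.1.2 / 2) ^+ 2 + sin (p.2 / 2) ^+ 2).

(* x ln x, with the convention 0 ln 0 = 0 (ln 0 = 0 in mathcomp-analysis) *)
Definition xlnx (R : realType) (x : R) : R := x * ln x.

Definition betaf (R : realType) (g a : pt R -> R) (p : pt R) : R :=
  Num.sqrt ((2^-1 + g p) ^+ 2 - a p ^+ 2).

Definition entropy_density (R : realType) (g a : pt R -> R) (p : pt R) : R :=
  xlnx (betaf g a p + 2^-1) - xlnx (betaf g a p - 2^-1).

Definition entropy (R : realType) (g a : pt R -> R) : R :=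
  tint (entropy_density g a).

Definition Ffun (R : realType) (U mu T : R) (g a : pt R -> R) (rho0 : R) : R :=
  tint (fun p => (disp p - mu) * g p) - mu * rho0 - T * entropy g a
  + U / 2 * (tint a) ^+ 2 + U * (tint g) ^+ 2 + U * rho0 * tint a
  + 2 * U * rho0 * tint g + U / 2 * rho0 ^+ 2.

Definition inD (R : realType) (g a : pt R -> R) (rho0 : R) : Prop :=
  [/\ (@leb3 R).-integrable (@box R) (EFin \o g),
      measurable_fun (@box R) a,
      {ae @leb3 R, forall p : pt R, @box R p -> 0 <= g p /\ a p ^+ 2 <= g p * (1 + g p)}
    & 0 <= rho0].

Definition Finf (R : realType) (U mu T : R) : \bar R :=
  ereal_inf [set (Ffun U mu T x.1.1 x.1.2 x.2)%:E | x in [set x | inD x.1.1 x.1.2 x.2]].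

Definition minimizing_seq (R : realType) (U mu T : R)
    (gs as_ : nat -> pt R -> R) (rs : nat -> R) : Prop :=
  (forall n, inD (gs n) (as_ n) (rs n)) /\
  ((fun n => (Ffun U mu T (gs n) (as_ n) (rs n))%:E) @ \oo --> Finf U mu T).

From HB Require Import structures.
From mathcomp Require Import all_boot all_order all_algebra.
From mathcomp Require Import all_classical all_reals all_analysis.
From mathcomp Require Import ring lra measurable_realfun.
Set Implicit Arguments.
Unset Strict Implicit.
Unset Printing Implicit Defensive.
Import Order.TTheory GRing.Theory Num.Theory.
Import numFieldNormedType.Exports.
Local Open Scope classical_set_scope.
Local Open Scope ring_scope.

(* Pointwise, the constraint [alpha^2 <= gamma (1 + gamma)] gives [|alpha| <= gamma + 1/2], and
   the entropy density is at most [1 + gamma]; moreover [eps >= 0].  Integrating, the terms of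
   F that are not manifestly nonnegative are all bounded below by affine functions of [rho0]
   and [rho_gamma], while [U/2 (int alpha + rho0)^2 + U rho_gamma^2] together with
   [|int alpha| <= rho_gamma + 1/2] controls [rho0^2 + rho_gamma^2]; completing squares gives
   the coercivity bound.  Along a minimizing sequence F converges to the infimum, which is
   finite (bounded below by [-C], above by F(0,0,0)), so F is bounded above and the bound
   applies uniformly. *)

(* The generic [Filter (almost_everywhere _)] hint does not unfold [leb3]. *)
#[local] Instance leb3_ae_filter (R : realType) : Filter (almost_everywhere (@leb3 R)) :=
  ae_filter_ringOfSetsType _.

Section torus_integral.
Variable R : realType.
Implicit Types (k : R) (f h : pt R -> R).
Local Notation mu3 := (@leb3 R).
Local Notation B := (@box R).
(* the sigma-algebra on which [leb3] is defined *)
Local Notation T3 := ((measurableTypeR R * measurableTypeR R) * measurableTypeR R)%type.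

Let inv_vol_gt0 : 0 < ((2 * pi) ^+ 3)^-1 :> R.
Proof. by rewrite invr_gt0 exprn_gt0 // mulr_gt0 // pi_gt0. Qed.

Lemma measurable_box : measurable (B : set T3).
Proof. by apply: measurableX; [apply: measurableX|]; exact: measurable_itv. Qed.

Lemma leb3_box : mu3 B = ((2 * pi) ^+ 3)%:E.
Proof.
have mI : measurable (`[- pi, pi] : set R) := measurable_itv _.
have I2pi : lebesgue_measure (`[- pi, pi] : set R) = (2 * pi)%:E.
  rewrite lebesgue_measure_itv /= lte_fin gtrN ?pi_gt0 //.
  by congr (_%:E); ring.
rewrite /leb3 /box product_measure1E; [|exact: measurableX|exact: mI].
rewrite /= product_measure1E //.
transitivity ((2 * pi : R)%:E * (2 * pi : R)%:E * (2 * pi : R)%:E)%E; first by congr (_ * _ * _)%E.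
by rewrite -!EFinM; congr (_%:E); ring.
Qed.

Lemma integrable_cst_box k : mu3.-integrable B (EFin \o cst k).
Proof.
apply/integrableP; split; first exact/measurable_EFinP/measurable_cst.
rewrite (_ : (fun p => _) = cst `|k|%:E) // integral_cst; last exact: measurable_box.
rewrite [X in (_ * X)%E](_ : _ = ((2 * pi) ^+ 3)%:E); last exact: leb3_box.
by rewrite -EFinM ltry.
Qed.

Lemma tint_cst k : tint (cst k) = k.
Proof.
rewrite /tint Rintegral_cst; last exact: measurable_box.
rewrite [X in fine X](_ : _ = ((2 * pi) ^+ 3)%:E); last exact: leb3_box.
by rewrite /= mulfK // expf_neq0 // mulf_neq0 // gt_eqF ?pi_gt0.
Qed.

Section negligible.
Variable N : set (pt R).
Hypotheses (mN : measurable N) (N0 : mu3 N = 0).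

Lemma integrable_box_setD f : measurable_fun B f ->
  mu3.-integrable (B `\` N) (EFin \o f) -> mu3.-integrable B (EFin \o f).
Proof.
move=> mf /integrableP[_ fi]; apply/integrableP; split; first exact/measurable_EFinP.
rewrite (ge0_negligible_integral _ _ _ _ N0) //; first exact: measurable_box.
by apply: measurableT_comp => //; exact/measurable_EFinP.
Qed.

Lemma Rintegral_box_setD f : mu3.-integrable B (EFin \o f) ->
  Rintegral mu3 B f = Rintegral mu3 (B `\` N) f.
Proof.
by move=> fi; rewrite /Rintegral (negligible_integral _ _ fi N0) //; exact: measurable_box.
Qed.

End negligible.

Lemma integrable_box_ae_le f h : measurable_fun B f -> mu3.-integrable B (EFin \o h) ->
  {ae mu3, forall p, B p -> `|f p| <= h p} -> mu3.-integrable B (EFin \o f).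
Proof.
move=> mf hi [N [mN N0 sN]]; apply: (integrable_box_setD mN N0 mf).
have mBN := measurableD measurable_box mN.
have hiBN := integrableS measurable_box mBN (@subDsetl _ _ _) hi.
apply: (le_integrable mBN _ _ hiBN).
  by apply/measurable_EFinP; apply: (measurable_funS measurable_box (@subDsetl _ _ _)); exact: mf.
move=> p [Bp Np] /=; rewrite lee_fin (le_trans _ (ler_norm _)) //.
by apply: contrapT => /= fp; apply/Np/sN => /(_ Bp).
Qed.

Lemma le_tint_ae f1 f2 :
  mu3.-integrable B (EFin \o f1) -> mu3.-integrable B (EFin \o f2) ->
  {ae mu3, forall p, B p -> f1 p <= f2 p} -> tint f1 <= tint f2.
Proof.
move=> i1 i2 [N [mN N0 sN]].
have mBN := measurableD measurable_box mN.
have iBN f : mu3.-integrable B (EFin \o f) -> mu3.-integrable (B `\` N) (EFin \o f).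
  exact: integrableS measurable_box mBN (@subDsetl _ _ _).
rewrite /tint ler_pM2r //.
rewrite (Rintegral_box_setD mN N0 i1) (Rintegral_box_setD mN N0 i2).
apply: le_Rintegral; [exact: mBN|exact: iBN|exact: iBN|move=> p [Bp Np]].
by apply: contrapT => fp; apply/Np/sN => /(_ Bp).
Qed.

Lemma tintD f1 f2 : mu3.-integrable B (EFin \o f1) -> mu3.-integrable B (EFin \o f2) ->
  tint (fun p => f1 p + f2 p) = tint f1 + tint f2.
Proof. by move=> i1 i2; rewrite /tint (RintegralD measurable_box i1 i2) mulrDl. Qed.

Lemma tintZl k f : mu3.-integrable B (EFin \o f) -> tint (fun p => k * f p) = k * tint f.
Proof. by move=> fi; rewrite /tint (RintegralZl _ measurable_box fi) mulrA. Qed.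

Lemma le_normr_tint f : mu3.-integrable B (EFin \o f) -> `|tint f| <= tint (fun p => `|f p|).
Proof.
move=> fi; rewrite /tint normrM (gtr0_norm inv_vol_gt0) ler_pM2r //.
exact: le_normr_Rintegral measurable_box fi.
Qed.

End torus_integral.

Lemma xlnxD1_subr_bounds (R : realType) (c : R) : 0 <= c ->
  0 <= xlnx (c + 1) - xlnx c <= 1 + c.
Proof.
rewrite le_eqVlt => /predU1P[<-|c0].
  by rewrite /xlnx add0r ln1 !mul0r mulr0 subr0 lexx /=; lra.
have cV0 : 0 < c^-1 by rewrite invr_gt0.
(* Both upper bounds are [ln (1 + x) <= x], at [x = c] and at [x = 1/c]. *)
have lnD : ln (c + 1) = ln c + ln (1 + c^-1).
  by rewrite -lnM ?posrE ?addr_gt0 // mulrDr mulr1 mulfV ?gt_eqF // addrC.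
have -> : xlnx (c + 1) - xlnx c = ln (c + 1) + c * ln (1 + c^-1).
  by rewrite /xlnx !lnD; ring.
have l1 : 0 <= ln (c + 1) by apply: ln_ge0; lra.
have l2 : ln (c + 1) <= c by rewrite addrC le_ln1Dx //; lra.
have l3 : 0 <= c * ln (1 + c^-1) by rewrite mulr_ge0 ?ln_ge0 //; lra.
have l4 : c * ln (1 + c^-1) <= 1.
  by rewrite -[leRHS](mulfV (lt0r_neq0 c0)) ler_wpM2l ?le_ln1Dx //; lra.
by apply/andP; split; lra.
Qed.

Lemma normr_le_of_sqr_le_mulD1 (R : realFieldType) (g a : R) :
  0 <= g -> a ^+ 2 <= g * (1 + g) -> `|a| <= g + 2^-1.
Proof.
move=> g0 ha; rewrite -ler_sqr ?nnegrE ?normr_ge0 //; last lra.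
have i2 : (2^-1 : R) * 2 = 1 by rewrite mulVf.
by rewrite real_normK ?num_real //; nra.
Qed.

Lemma entropy_density_bounds (R : realType) (g a : pt R -> R) (p : pt R) :
  0 <= g p -> a p ^+ 2 <= g p * (1 + g p) ->
  0 <= entropy_density g a p <= 1 + g p.
Proof.
rewrite /entropy_density; set b := betaf g a p => g0 ha.
have i2 : (2^-1 : R) * 2 = 1 by rewrite mulVf.
have q4 : 2^-1 * 2^-1 <= (2^-1 + g p) ^+ 2 - a p ^+ 2 by nra.
have b2 : b ^+ 2 = (2^-1 + g p) ^+ 2 - a p ^+ 2.
  by rewrite sqr_sqrtr // (le_trans _ q4) // mulr_ge0.
have b0 : 0 <= b := sqrtr_ge0 _.
have b_ge : 2^-1 <= b by nra.
have b_le : b <= g p + 2^-1 by nra.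
have /andP[e0 e1] : 0 <= xlnx (b - 2^-1 + 1) - xlnx (b - 2^-1) <= 1 + (b - 2^-1).
  by apply: xlnxD1_subr_bounds; lra.
have -> : b + 2^-1 = b - 2^-1 + 1 by lra.
by apply/andP; split; lra.
Qed.

Lemma disp_bounds (R : realType) (p : pt R) : 0 <= disp p <= 12.
Proof.
have sin2 (x : R) : 0 <= sin x ^+ 2 <= 1 by rewrite sqr_ge0 /= sin2cos2 lerBlDr lerDl sqr_ge0.
rewrite /disp; move: (sin2 (p.1.1 / 2)) (sin2 (p.1.2 / 2)) (sin2 (p.2 / 2)).
by move=> /andP[? ?] /andP[? ?] /andP[? ?]; apply/andP; split; lra.
Qed.

Lemma measurable_xlnx (R : realType) : measurable_fun setT (@xlnx R).
Proof. by apply: measurable_funM => //; exact: measurable_ln. Qed.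

Lemma measurable_disp (R : realType) (D : set (pt R)) : measurable_fun D (@disp R).
Proof.
have ms : measurable_fun setT (fun x : R => sin (x / 2) ^+ 2).
  apply/measurable_funX/measurableT_comp; last exact: measurable_funM.
  exact: continuous_measurable_fun (@continuous_sin R).
have m1 : measurable_fun D (fun p : pt R => p.1) :=
  measurableT_comp measurable_fst (@measurable_id _ _ D).
have m11 : measurable_fun D (fun p : pt R => p.1.1) := measurableT_comp measurable_fst m1.
have m12 : measurable_fun D (fun p : pt R => p.1.2) := measurableT_comp measurable_snd m1.
have m2 : measurable_fun D (fun p : pt R => p.2) :=
  measurableT_comp measurable_snd (@measurable_id _ _ D).
apply: measurable_funM => //; apply: measurable_funD; first apply: measurable_funD.
all: exact: measurableT_comp ms _.
Qed.

Lemma measurable_entropy_density (R : realType) (D : set (pt R)) (g a : pt R -> R) :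
  measurable_fun D g -> measurable_fun D a -> measurable_fun D (entropy_density g a).
Proof.
move=> mg ma.
have mb : measurable_fun D (betaf g a).
  apply: measurableT_comp; first exact: continuous_measurable_fun (@sqrt_continuous R).
  by apply: measurable_funB; apply: measurable_funX => //; exact: measurable_funD.
by apply: measurable_funB; apply: measurableT_comp;
  [exact: measurable_xlnx|exact: measurable_funD|exact: measurable_xlnx|exact: measurable_funB].
Qed.

Section domain_estimates.
Variables (R : realType) (g a : pt R -> R) (rho0 : R).
Hypothesis gaD : inD g a rho0.
Local Notation mu3 := (@leb3 R).
Local Notation B := (@box R).

Let ig : mu3.-integrable B (EFin \o g). Proof. by case: gaD. Qed.

Let mg : measurable_fun B g.
Proof. by have /measurable_EFinP mg := measurable_int _ ig; exact: mg. Qed.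

Let ma : measurable_fun B a. Proof. by case: gaD. Qed.

Let ae_gaD : {ae mu3, forall p, B p -> 0 <= g p /\ a p ^+ 2 <= g p * (1 + g p)}.
Proof. by case: gaD. Qed.

Let ae_ge0 : {ae mu3, forall p, B p -> 0 <= g p}.
Proof. by move: ae_gaD; apply: filterS => p gp /gp[]. Qed.

Let ae_pairing_le : {ae mu3, forall p, B p -> `|a p| <= g p + 2^-1}.
Proof. by move: ae_gaD; apply: filterS => p gp /gp[]; exact: normr_le_of_sqr_le_mulD1. Qed.

Let ae_entropy_density : {ae mu3, forall p, B p -> 0 <= entropy_density g a p <= 1 + g p}.
Proof. by move: ae_gaD; apply: filterS => p gp /gp[]; exact: entropy_density_bounds. Qed.

Let integrable_dominated (K : R) (f : pt R -> R) : measurable_fun B f ->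
  {ae mu3, forall p, B p -> `|f p| <= K * (g p + 1)} -> mu3.-integrable B (EFin \o f).
Proof.
move=> mf; apply: integrable_box_ae_le mf _.
by have := integrableZl (@measurable_box R) K
  (integrableD (@measurable_box R) ig (integrable_cst_box 1)).
Qed.

Let integrable_dominated1 (f : pt R -> R) : measurable_fun B f ->
  {ae mu3, forall p, B p -> `|f p| <= g p + 1} -> mu3.-integrable B (EFin \o f).
Proof.
move=> mf ae_f; apply: (@integrable_dominated 1 _ mf).
by move: ae_f; apply: filterS => p; rewrite mul1r.
Qed.

Let ia : mu3.-integrable B (EFin \o a).
Proof.
by apply: integrable_dominated1 ma _; move: ae_pairing_le; apply: filterS => p ap /ap; lra.
Qed.

Let igc (c : R) : 0 <= c <= 1 -> mu3.-integrable B (EFin \o (fun p => c + g p)).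
Proof.
move=> /andP[c0 c1]; apply: integrable_dominated1; first by apply: measurable_funD.
by move: ae_ge0; apply: filterS => p gp /gp g0; rewrite ger0_norm; lra.
Qed.

Lemma tint_density_ge0 : 0 <= tint g.
Proof. by rewrite -(tint_cst (0 : R)); exact: le_tint_ae (integrable_cst_box _) ig ae_ge0. Qed.

Lemma tint_normr_density_le : tint (fun p => `|g p|) <= tint g.
Proof.
apply: le_tint_ae ig _; last by move: ae_ge0; apply: filterS => p gp /gp g0; rewrite ger0_norm.
apply: integrable_dominated1; first exact: measurableT_comp.
by move: ae_ge0; apply: filterS => p gp /gp g0; rewrite normr_id ger0_norm //; lra.
Qed.

Lemma tint_normr_pairing_le : tint (fun p => `|a p|) <= tint g + 2^-1.
Proof.
rewrite -(tint_cst (2^-1 : R)) addrC -tintD ?integrable_cst_box //.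
apply: le_tint_ae (igc _) _; last by move: ae_pairing_le; apply: filterS => p ap /ap; lra.
- apply: integrable_dominated1; first exact: measurableT_comp.
  by move: ae_pairing_le; apply: filterS => p ap /ap; rewrite normr_id; lra.
- by apply/andP; split; lra.
Qed.

Lemma normr_tint_pairing_le : `|tint a| <= tint g + 2^-1.
Proof. exact: le_trans (le_normr_tint ia) tint_normr_pairing_le. Qed.

Lemma tint_kinetic_ge (mu : R) : - mu * tint g <= tint (fun p => (disp p - mu) * g p).
Proof.
have mdisp : measurable_fun B (@disp R) by apply: measurable_disp.
rewrite -tintZl //; apply: le_tint_ae; last first.
- move: ae_ge0; apply: filterS => p gp /gp g0; have /andP[d0 _] := disp_bounds p.
  by rewrite mulrBl -mulNr lerDr mulr_ge0.
- apply: (@integrable_dominated (12 + `|mu|)).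
    by apply: measurable_funM => //; exact: measurable_funB.
  move: ae_ge0; apply: filterS => p gp /gp g0; have /andP[d0 d12] := disp_bounds p.
  rewrite normrM (ger0_norm g0) ler_pM ?normr_ge0 //; last lra.
  by rewrite (le_trans (ler_normB _ _)) // ger0_norm //; lra.
- apply: (@integrable_dominated `|mu|); first by apply: measurable_funM.
  move: ae_ge0; apply: filterS => p gp /gp g0.
  by rewrite normrM normrN ger0_norm // ler_wpM2l //; lra.
Qed.

Lemma entropy_le : entropy g a <= 1 + tint g.
Proof.
rewrite -(tint_cst (1 : R)) -tintD ?integrable_cst_box //.
apply: le_tint_ae (igc _) _; last by move: ae_entropy_density; apply: filterS => p ep /ep/andP[].
- apply: integrable_dominated1; first exact: measurable_entropy_density.
  by move: ae_entropy_density; apply: filterS => p ep /ep/andP[e0 e1]; rewrite ger0_norm //; lra.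
- by apply/andP; split; lra.
Qed.

End domain_estimates.

Lemma sqr_absorbs_linear (R : realFieldType) (U m x : R) : 0 < U ->
  m * x <= U / 16 * x ^+ 2 + 4 * m ^+ 2 / U.
Proof.
move=> U0; rewrite -subr_ge0.
have -> : U / 16 * x ^+ 2 + 4 * m ^+ 2 / U - m * x = (U * x - 8 * m) ^+ 2 / (16 * U).
  by field; rewrite gt_eqF.
by rewrite divr_ge0 ?sqr_ge0 // mulr_ge0 //; lra.
Qed.

Definition coercivity_const (R : realFieldType) (U mu T : R) : R :=
  U / 8 + T + 4 * mu ^+ 2 / U + 4 * (mu + T) ^+ 2 / U + 1.

Lemma coercivity_const_gt0 (R : realFieldType) (U mu T : R) : 0 < U -> 0 <= T ->
  0 < coercivity_const U mu T.
Proof.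
move=> U0 T0; have U8 : 0 < U / 8 by rewrite divr_gt0.
have sq_div (m : R) : 0 <= 4 * m ^+ 2 / U.
  by apply: divr_ge0 (ltW U0); apply: mulr_ge0; [lra|exact: sqr_ge0].
by have := sq_div mu; have := sq_div (mu + T); rewrite /coercivity_const; lra.
Qed.

(* [x] stands for [rho0], [y] for [rho_gamma], [s] for the integral of alpha, [k] for the
   kinetic term and [S] for the entropy. *)
Lemma coercivity_ineq (R : realFieldType) (U mu T x y s k S : R) :
  0 < U -> 0 <= T -> 0 <= x -> 0 <= y ->
  `|s| <= y + 2^-1 -> - mu * y <= k -> S <= 1 + y ->
  U / 16 * (x ^+ 2 + y ^+ 2) - coercivity_const U mu T <=
  k - mu * x - T * S + U / 2 * s ^+ 2 + U * y ^+ 2 + U * x * s + 2 * U * x * y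
  + U / 2 * x ^+ 2.
Proof.
move=> U0 T0 x0 y0 hs hk hS.
have TS : T * S <= T + T * y by rewrite -[T in T + _]mulr1 -mulrDr ler_wpM2l.
(* [x] is recovered from [s + x] and [s], and [s] is controlled by [y]. *)
have s2 : s ^+ 2 <= 2 * y ^+ 2 + 2^-1.
  have : s ^+ 2 <= (y + 2^-1) ^+ 2.
    by rewrite -real_normK ?num_real // lerXn2r // nnegrE; lra.
  have : 0 <= (y - 2^-1) ^+ 2 := sqr_ge0 _.
  have i2 : (2^-1 : R) * 2 = 1 by rewrite mulVf.
  by nra.
have x2 : x ^+ 2 <= 2 * (s + x) ^+ 2 + 4 * y ^+ 2 + 1.
  by have := sqr_ge0 (2 * s + x); nra.
have Ux2 : U * x ^+ 2 <= U * (2 * (s + x) ^+ 2 + 4 * y ^+ 2 + 1) by rewrite ler_wpM2l //; lra.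
have Usx : 0 <= U * (s + x) ^+ 2 by rewrite mulr_ge0 ?sqr_ge0 //; lra.
have Uxy : 0 <= U * y * x by rewrite !mulr_ge0 //; lra.
have lx := sqr_absorbs_linear mu x U0.
have ly := sqr_absorbs_linear (mu + T) y U0.
have eU : U / 2 * s ^+ 2 + U * x * s + U / 2 * x ^+ 2 = U / 2 * (s + x) ^+ 2 by field.
rewrite /coercivity_const; nra.
Qed.

Lemma Ffun_coercive (R : realType) (U mu T : R) (g a : pt R -> R) (rho0 : R) :
  0 < U -> 0 <= T -> inD g a rho0 ->
  U / 16 * (rho0 ^+ 2 + tint g ^+ 2) - coercivity_const U mu T <= Ffun U mu T g a rho0.
Proof.
move=> U0 T0 gaD; have [_ _ _ rho0_ge0] := gaD.
exact: coercivity_ineq U0 T0 rho0_ge0 (tint_density_ge0 gaD) (normr_tint_pairing_le gaD)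
  (tint_kinetic_ge gaD mu) (entropy_le gaD).
Qed.

Lemma inD0 (R : realType) : inD (fun _ : pt R => 0) (fun _ => 0) 0.
Proof.
split=> //; first exact: integrable_cst_box.
by apply: aeW => p _; rewrite expr0n /= mul0r.
Qed.

Lemma Finf_fin_num (R : realType) (U mu T : R) : 0 < U -> 0 <= T ->
  Finf U mu T \is a fin_num.
Proof.
move=> U0 T0; rewrite fin_numElt; apply/andP; split.
  apply: (@lt_le_trans _ _ (- coercivity_const U mu T)%:E); first exact: ltNyr.
  apply: le_ereal_inf_tmp => _ [[[g a] r] /= gaD <-]; rewrite lee_fin.
  have := Ffun_coercive mu U0 T0 gaD.
  have : 0 <= U / 16 * (r ^+ 2 + tint g ^+ 2) by rewrite !mulr_ge0 ?addr_ge0 ?sqr_ge0 //; lra.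
  lra.
apply: (@le_lt_trans _ _ (Ffun U mu T (fun _ => 0) (fun _ => 0) 0)%:E); last exact: ltry.
by apply: ereal_inf_lbound; exists ((fun _ => 0, fun _ => 0), 0) => //; exact: inD0.
Qed.

Lemma cvg_EFin_has_ub (R : realType) (u : nat -> R) (l : \bar R) :
  (fun n => (u n)%:E) @ \oo --> l -> l \is a fin_num -> exists K, forall n, u n <= K.
Proof.
move=> ul /fineK l_fin; rewrite -l_fin in ul.
move/fine_cvgP : ul => [_ /cvgP/cvg_seq_bounded/bounded_fun_has_ubound [K uK]].
by exists K => n; apply: uK; exists n.
Qed.

Lemma le_of_scaled_sqr_le (R : realFieldType) (e Q z : R) : 0 < e -> e * z ^+ 2 <= Q ->
  z <= 1 + Q / e.
Proof.
move=> e0 ezQ; have z2 : z ^+ 2 <= Q / e by rewrite ler_pdivlMr // mulrC.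
have := sqr_ge0 z; have [z1|z1] := lerP z 1; nra.
Qed.

Lemma Ffun_sublevel_bounded (R : realType) (U mu T K : R) (g a : pt R -> R) (rho0 : R) :
  0 < U -> 0 <= T -> inD g a rho0 -> Ffun U mu T g a rho0 <= K ->
  let M := 1 + (K + coercivity_const U mu T) / (U / 16) in rho0 <= M /\ tint g <= M.
Proof.
move=> U0 T0 gaD FK M; have U16 : 0 < U / 16 by rewrite divr_gt0.
have := Ffun_coercive mu U0 T0 gaD.
have := sqr_ge0 rho0; have := sqr_ge0 (tint g).
by split; apply: le_of_scaled_sqr_le U16 _; nra.
Qed.

Theorem corollary3p2 (R : realType) (U mu T : R) :
  0 < U -> 0 <= T ->
  (exists eta C : R, 0 < eta /\ 0 < C /\
     forall (g a : pt R -> R) (rho0 : R), inD g a rho0 ->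
       eta * (rho0 ^+ 2 + (tint g) ^+ 2) - C <= Ffun U mu T g a rho0)
  /\
  (forall (gs as_ : nat -> pt R -> R) (rs : nat -> R),
     minimizing_seq U mu T gs as_ rs ->
     exists M : R, forall n,
       rs n <= M /\ tint (fun p => `|gs n p|) <= M /\ tint (fun p => `|as_ n p|) <= M).
Proof.
move=> U0 T0; split.
  exists (U / 16), (coercivity_const U mu T); split; first by rewrite divr_gt0.
  by split=> [|g a rho0]; [exact: coercivity_const_gt0|exact: Ffun_coercive].
move=> gs as_ rs [gsD Fcvg].
have [K FK] := cvg_EFin_has_ub Fcvg (Finf_fin_num mu U0 T0).
exists (1 + (K + coercivity_const U mu T) / (U / 16) + 2^-1) => n.
have [rs_le gs_le] := Ffun_sublevel_bounded U0 T0 (gsD n) (FK n).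
have := tint_normr_density_le (gsD n); have := tint_normr_pairing_le (gsD n).
by split; [|split]; lra.
Qed.
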